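(* Let $\mathcal V=\mathbb R^d$ with the Euclidean norm, and fix $r>0$ and an integer $\tau\ge0$. Consider linear losses $f_t(x)=\langle g_t,x\rangle$ with uniform delay $\tau$ ($\mathcal S_t=\{1,\dots,t-\tau-1\}$), and run DODA with guesses $\tilde g_{t+1/2}=g_{t-\tau-1}$ and constant learning rates $\eta,\gamma$, where $\eta=\eta(r,T,\tau,V^{\tau+1}_T)$ is uniquely determined by $r$, the horizon $T$, $\tau$ and $V^{\tau+1}_T$, and $\gamma\le\tau\eta$. Then it is impossible to guarantee a regret in $o(\max(V^{\tau+1}_T,\sqrt T))$: it is not true that for every $\varepsilon>0$ there exists $N$ such that, for every instance (horizon $T$, linear losses, initial point $x_1$, comparator $p$ with $\|p-x_1\|\le r$) with $\max(V^{\tau+1}_T,\sqrt T)\ge N$, the regret satisfies $R_T(p)\le\varepsilon\max(V^{\tau+1}_T,\sqrt T)$.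
   Context: DODA (unconstrained Euclidean): given $x_1$, $x_t=x_1-\eta\sum_{s\in\mathcal S_t}g_{s+1/2}$ and $x_{t+1/2}=x_t-\gamma\tilde g_{t+1/2}$; the played point at round $t$ is $x_{t+1/2}$, with feedback $g_{t+1/2}=\nabla f_t(x_{t+1/2})$, which for linear losses equals $g_t$. Regret: $R_T(p)=\sum_{t=1}^Tf_t(x_{t+1/2})-\sum_{t=1}^Tf_t(p)$. Convention $g_t=0$ for $t\le0$. $(\tau+1)$-variation: $V^{\tau+1}_T=\sum_{t=1}^T\|g_t-g_{t-\tau-1}\|^2$. *)

From HB Require Import structures.
From mathcomp Require Import all_boot all_order all_algebra.
From mathcomp Require Import reals.
Set Implicit Arguments. Unset Strict Implicit. Unset Printing Implicit Defensive.
Import Order.TTheory GRing.Theory Num.Theory.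
Local Open Scope ring_scope.

Section DODA.
Variables (R : realType) (d : nat).

Definition dotv (u v : 'rV[R]_d) : R := \sum_(i < d) u ord0 i * v ord0 i.
Definition normv (u : 'rV[R]_d) : R := Num.sqrt (dotv u u).

(* g_{t-k} with the convention g_s = 0 for s <= 0 (t >= 1, k = tau+1) *)
Definition gdel (tau : nat) (g : nat -> 'rV[R]_d) (t : nat) : 'rV[R]_d :=
  if (t <= tau.+1)%N then 0 else g (t - tau.+1)%N.

Definition doda_x (eta : R) (x1 : 'rV[R]_d) (g : nat -> 'rV[R]_d) (tau t : nat)
  : 'rV[R]_d := x1 - eta *: \sum_(1 <= s < t - tau) g s.

Definition doda_play (eta gamma : R) (x1 : 'rV[R]_d) (g : nat -> 'rV[R]_d)
  (tau t : nat) : 'rV[R]_d :=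
  doda_x eta x1 g tau t - gamma *: gdel tau g t.

Definition regret (T : nat) (eta gamma : R) (x1 : 'rV[R]_d)
  (g : nat -> 'rV[R]_d) (tau : nat) (p : 'rV[R]_d) : R :=
  \sum_(1 <= t < T.+1) dotv (g t) (doda_play eta gamma x1 g tau t)
  - \sum_(1 <= t < T.+1) dotv (g t) p.

Definition variation (T tau : nat) (g : nat -> 'rV[R]_d) : R :=
  \sum_(1 <= t < T.+1) normv (g t - gdel tau g t) ^+ 2.

End DODA.

(* On a line spanned by a basis vector, with x_1 = 0 and scalar gradients a_t, DODA plays
   -(eta (a_1 + ... + a_{t-tau-1}) + gamma a_{t-tau-1}).  As long as a_t a_{t-tau-1} is below
   a_t a_s for the tau most recent s, the condition gamma <= tau eta makes the delayed guess cost
   at least as much as eta times those tau gradients, so the learner's loss is at least that of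
   the undelayed play -eta (a_1 + ... + a_{t-1}), namely -eta/2 (S^2 - Q) with S and Q the sum
   and the sum of squares of the a_t.
   Two gradient sequences, each made of two constant blocks separated by tau + 1 zeros (which
   keeps that condition true), with the same horizon T = 5q^2 + tau + 1 and the same variation
   18 (tau + 1) receive the same rates: 4q^2 ones followed by q^2 times -4 (S = 0, Q = 20 q^2)
   has regret at least 10 eta q^2, and q threes (S = 3q) against the comparator -r has regret
   at least 3 r q - 9/2 eta q^2.  Both regrets cannot stay below (r/2) max(V, sqrt T) <= 3rq/2. *)

From HB Require Import structures.
From mathcomp Require Import all_boot all_order all_algebra.
From mathcomp Require Import reals.
From mathcomp Require Import ring lra zify.
Import Order.TTheory GRing.Theory Num.Theory.
Set Implicit Arguments. Unset Strict Implicit.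
Local Open Scope ring_scope.

Definition psum (R : nmodType) (a : nat -> R) (k : nat) : R := \sum_(1 <= s < k) a s.

Lemma psum_sqr (R : comNzRingType) (a : nat -> R) (T : nat) :
  psum a T.+1 ^+ 2 = \sum_(1 <= t < T.+1) a t ^+ 2 + 2 * \sum_(1 <= t < T.+1) a t * psum a t.
Proof.
elim: T => [|T IH]; first by rewrite /psum !big_geq // expr0n mulr0 addr0.
rewrite /psum in IH *; rewrite !(big_nat_recr T.+1) //= sqrrD IH; ring.
Qed.

Section DelayedLoss.
Variables (R : realFieldType) (a : nat -> R) (tau : nat) (eta gamma : R).
Hypotheses (a0 : a 0 = 0) (eta_ge0 : 0 <= eta) (gamma_le : gamma <= tau%:R * eta).
Hypothesis delayed_mul_ge0 : forall t, 0 <= a t * a (t - tau.+1)%N.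
Hypothesis delayed_mul_min : forall t s,
  (0 < s < t)%N -> (t <= s + tau)%N -> a t * a (t - tau.+1)%N <= a t * a s.

Definition doda1_play t := - (eta * psum a (t - tau) + gamma * a (t - tau.+1)%N).

Lemma delayed_mul_window t : (tau < t)%N ->
  gamma * (a t * a (t - tau.+1)%N) <= eta * (a t * \sum_(t - tau <= s < t) a s).
Proof.
move=> tau_lt_t; set x := a t * a (t - tau.+1)%N.
have tau_x : tau%:R * x <= a t * \sum_(t - tau <= s < t) a s.
  have -> : tau%:R * x = \sum_(t - tau <= s < t) x.
    by rewrite sumr_const_nat mulr_natl; congr (_ *+ _); lia.
  rewrite mulr_sumr; apply: ler_sum_nat => s /andP[? ?].
  apply: delayed_mul_min; lia.
apply: le_trans (ler_wpM2l eta_ge0 tau_x).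
by rewrite -/x [eta * _]mulrA (mulrC eta); exact: ler_wpM2r (delayed_mul_ge0 t) _ _ gamma_le.
Qed.

Lemma doda1_loss_term_ge t : - eta * (a t * psum a t) <= a t * doda1_play t.
Proof.
rewrite /doda1_play; case: (leqP t tau) => [t_le_tau | tau_lt_t].
  have delay0 : (t - tau.+1 = 0)%N by lia.
  have -> : (t - tau = 0)%N by lia.
  rewrite delay0 [psum a 0]/psum big_geq // a0 !(mulr0, addr0, oppr0).
  rewrite mulNr oppr_le0 mulr_ge0 // /psum mulr_sumr big_nat sumr_ge0 // => s /andP[? ?].
  have := delayed_mul_min (s := s) (t := t); rewrite delay0 a0 mulr0; apply; lia.
have -> : psum a t = psum a (t - tau) + \sum_(t - tau <= s < t) a s.
  by rewrite /psum -big_cat_nat //; lia.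
have := delayed_mul_window tau_lt_t; lra.
Qed.

Lemma doda1_loss_ge T :
  eta / 2 * (\sum_(1 <= t < T.+1) a t ^+ 2 - psum a T.+1 ^+ 2) <=
  \sum_(1 <= t < T.+1) a t * doda1_play t.
Proof.
rewrite psum_sqr (_ : _ * _ = \sum_(1 <= t < T.+1) - eta * (a t * psum a t)).
  by apply: ler_sum_nat => t _; apply: doda1_loss_term_ge.
by rewrite -mulr_sumr; field.
Qed.

End DelayedLoss.

Lemma sum_nat_const_on (R : nmodType) (f : nat -> R) (lo hi : nat) (c : R) :
  (forall t, (lo <= t < hi)%N -> f t = c) -> \sum_(lo <= t < hi) f t = c *+ (hi - lo).
Proof. by move=> f_c; rewrite -sumr_const_nat; apply: eq_big_nat. Qed.

Definition two_blocks (R : nmodType) (L k m : nat) (u w : R) (t : nat) : R :=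
  if (0 < t <= k)%N then u else if (k + L < t <= k + L + m)%N then w else 0.

Ltac two_blocks_cases := rewrite /two_blocks; repeat (case: ifP => /= /idP ?).

Section TwoBlocks.
Variables (R : realFieldType) (L k m : nat) (u w : R).
Local Notation b := (two_blocks L k m u w).

Lemma sum_two_blocks (F : R -> R) : F 0 = 0 ->
  \sum_(1 <= t < (k + L + m).+1) F (b t) = F u *+ k + F w *+ m.
Proof.
move=> F0.
rewrite (big_cat_nat (n := k.+1)); try lia.
rewrite (big_cat_nat (m := k.+1) (n := (k + L).+1)); try lia.
rewrite (sum_nat_const_on (c := F u)); last first.
  by move=> t /andP[? ?]; two_blocks_cases; rewrite ?F0 //; lia.
rewrite (sum_nat_const_on (c := 0)); last first.
  by move=> t /andP[? ?]; two_blocks_cases; rewrite ?F0 //; lia.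
rewrite (sum_nat_const_on (c := F w)); last first.
  by move=> t /andP[? ?]; two_blocks_cases; rewrite ?F0 //; lia.
by rewrite /= mul0rn add0r; congr (_ *+ _ + _ *+ _); lia.
Qed.

Lemma sum_sqr_sub_two_blocks : (L <= k)%N -> (L <= m)%N ->
  \sum_(1 <= t < (k + L + m).+1) (b t - b (t - L)%N) ^+ 2 = (u ^+ 2 *+ 2 + w ^+ 2) *+ L.
Proof.
move=> L_le_k L_le_m.
rewrite (big_cat_nat (n := L.+1)); try lia.
rewrite (big_cat_nat (m := L.+1) (n := k.+1)); try lia.
rewrite (big_cat_nat (m := k.+1) (n := (k + L).+1)); try lia.
rewrite (big_cat_nat (m := (k + L).+1) (n := (k + L + L).+1)); try lia.
rewrite (sum_nat_const_on (c := u ^+ 2)); last first.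
  by move=> t /andP[? ?]; two_blocks_cases; first [lia | ring].
rewrite (sum_nat_const_on (c := 0)); last first.
  by move=> t /andP[? ?]; two_blocks_cases; first [lia | ring].
rewrite (sum_nat_const_on (c := u ^+ 2)); last first.
  by move=> t /andP[? ?]; two_blocks_cases; first [lia | ring].
rewrite (sum_nat_const_on (c := w ^+ 2)); last first.
  by move=> t /andP[? ?]; two_blocks_cases; first [lia | ring].
rewrite (sum_nat_const_on (c := 0)); last first.
  by move=> t /andP[? ?]; two_blocks_cases; first [lia | ring].
by rewrite /= !subSS subn0 !addKn !mul0rn add0r addr0 addrA -mulr2n mulrnAC -mulrnDl.
Qed.

End TwoBlocks.

Section DelayedTwoBlocks.
Variables (R : realFieldType) (tau k m : nat) (u w : R).
Local Notation b := (two_blocks tau.+1 k m u w).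

Lemma two_blocks_delayed_mul_ge0 t : 0 <= b t * b (t - tau.+1)%N.
Proof. two_blocks_cases; first [lia | nra]. Qed.

Lemma two_blocks_delayed_mul_min t s : (0 < s < t)%N -> (t <= s + tau)%N ->
  b t * b (t - tau.+1)%N <= b t * b s.
Proof. move=> /andP[? ?] ?; two_blocks_cases; first [lia | nra]. Qed.

End DelayedTwoBlocks.

Section Line.
Variables (R : realType) (d : nat) (i0 : 'I_d).
Local Notation e := (delta_mx 0 i0 : 'rV[R]_d).

Definition line (a : nat -> R) (t : nat) : 'rV[R]_d := a t *: e.

Lemma dotv_scale_delta (x y : R) : dotv (x *: e) (y *: e) = x * y.
Proof.
rewrite /dotv (bigD1 i0) //= big1 => [|i /negbTE i_neq]; rewrite !mxE ?eqxx ?i_neq /=.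
  by rewrite addr0 !mulr1.
by rewrite !mulr0.
Qed.

Lemma normv_scale_delta (x : R) : normv (x *: e) = `|x|.
Proof. by rewrite /normv dotv_scale_delta -expr2 sqrtr_sqr. Qed.

Variables (a : nat -> R) (tau : nat).
Hypothesis a0 : a 0 = 0.

Lemma gdel_line t : gdel tau (line a) t = a (t - tau.+1)%N *: e.
Proof.
rewrite /gdel; case: ifP => // t_le.
have -> : (t - tau.+1 = 0)%N by lia.
by rewrite a0 scale0r.
Qed.

Lemma doda_play_line (eta gamma : R) t :
  doda_play eta gamma 0 (line a) tau t = doda1_play a tau eta gamma t *: e.
Proof.
rewrite /doda_play /doda_x gdel_line /line -scaler_suml !scalerA sub0r -scaleNr -scalerBl.
by congr (_ *: _); rewrite /doda1_play /psum; ring.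
Qed.

Lemma regret_line T (eta gamma rho : R) :
  regret T eta gamma 0 (line a) tau ((- rho) *: e) =
  \sum_(1 <= t < T.+1) a t * doda1_play a tau eta gamma t + rho * psum a T.+1.
Proof.
rewrite /regret; congr (_ + _).
  by apply: eq_bigr => t _; rewrite doda_play_line dotv_scale_delta.
by rewrite -sumrN mulr_sumr; apply: eq_bigr => t _; rewrite dotv_scale_delta; ring.
Qed.

Lemma variation_line T :
  variation T tau (line a) = \sum_(1 <= t < T.+1) (a t - a (t - tau.+1)%N) ^+ 2.
Proof.
apply: eq_bigr => t _; rewrite gdel_line -scalerBl normv_scale_delta.
exact: real_normK (num_real _).
Qed.

End Line.

Section TwoBlocksLine.
Variables (R : realType) (d : nat) (i0 : 'I_d) (tau k m T : nat) (u w : R).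
Hypothesis horizon : (k + tau.+1 + m = T)%N.
Local Notation b := (two_blocks tau.+1 k m u w).

Lemma variation_two_blocks : (tau < k)%N -> (tau < m)%N ->
  variation T tau (line i0 b) = (u ^+ 2 *+ 2 + w ^+ 2) *+ tau.+1.
Proof. by move=> *; rewrite variation_line // -horizon sum_sqr_sub_two_blocks. Qed.

Lemma regret_two_blocks_ge (eta gamma rho : R) : 0 <= eta -> gamma <= tau%:R * eta ->
  eta / 2 * (u ^+ 2 *+ k + w ^+ 2 *+ m - (u *+ k + w *+ m) ^+ 2) + rho * (u *+ k + w *+ m)
  <= regret T eta gamma 0 (line i0 b) tau ((- rho) *: delta_mx 0 i0).
Proof.
move=> eta_ge0 gamma_le.
have sumS : psum b T.+1 = u *+ k + w *+ m.
  by rewrite /psum -horizon; exact: (@sum_two_blocks _ _ _ _ _ _ id).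
have sumQ : \sum_(1 <= t < T.+1) b t ^+ 2 = u ^+ 2 *+ k + w ^+ 2 *+ m.
  by rewrite -horizon; apply: (@sum_two_blocks _ _ _ _ _ _ (fun x => x ^+ 2)); rewrite expr0n.
rewrite regret_line // -sumQ -sumS lerD2r.
apply: doda1_loss_ge => //; [exact: two_blocks_delayed_mul_ge0 | exact: two_blocks_delayed_mul_min].
Qed.

End TwoBlocksLine.

Lemma sqrt_natr_between (R : rcfType) (a b n : nat) :
  (a * a <= n <= b * b)%N -> a%:R <= Num.sqrt (n%:R : R) <= b%:R.
Proof.
move=> /andP[lo hi]; rewrite -[a%:R]ger0_norm // -[b%:R]ger0_norm // -!sqrtr_sqr.
by rewrite !ler_wsqrtr // -natrX ler_nat -mulnn.
Qed.

Theorem theorem6 (R : realType) (d : nat) (r : R) (tau : nat)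
  (eta gamma : R -> nat -> nat -> R -> R) :
  (0 < d)%N -> 0 < r ->
  (forall (T : nat) (V : R), 0 <= V ->
     0 < eta r T tau V /\ 0 <= gamma r T tau V /\
     gamma r T tau V <= tau%:R * eta r T tau V) ->
  ~ (forall eps : R, 0 < eps -> exists N : R,
       forall (T : nat) (g : nat -> 'rV[R]_d) (x1 p : 'rV[R]_d),
         normv (p - x1) <= r ->
         N <= Num.max (variation T tau g) (Num.sqrt T%:R) ->
         regret T (eta r T tau (variation T tau g))
                  (gamma r T tau (variation T tau g)) x1 g tau p
         <= eps * Num.max (variation T tau g) (Num.sqrt T%:R)).
Proof.
move=> d_gt0 r_gt0 rates small_regret.
have [N small_regretN] := small_regret (r / 2) (divr_gt0 r_gt0 (ltr0n _ 2)).
have [q N_le_q tau_lt_q] : exists2 q : nat, N <= q%:R & (6 * tau.+1 < q)%N.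
  exists (6 * tau.+1 + Num.truncn N).+1; last by rewrite ltnS leq_addr.
  by apply: le_trans (ltW (truncnS_gt N)) _; rewrite ler_nat ltnS leq_addl.
pose i0 : 'I_d := Ordinal d_gt0.
pose n := (q * q)%N; pose T := (4 * n + tau.+1 + n)%N; pose V : R := 18 * tau.+1%:R.
have [eta_gt0 [_ gamma_le]] := rates T V (mulr_ge0 (ler0n _ 18) (ler0n _ _)).
have /andP[q_le_sqrtT sqrtT_le] : q%:R <= Num.sqrt (T%:R : R) <= (3 * q)%:R.
  by apply: sqrt_natr_between; apply/andP; split; nia.
have max_ge : N <= Num.max V (Num.sqrt T%:R).
  by rewrite le_max (le_trans N_le_q q_le_sqrtT) orbT.
have max_le : Num.max V (Num.sqrt T%:R) <= (3 * q)%:R.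
  by rewrite ge_max sqrtT_le andbT /V -natrM ler_nat; lia.
have regret_le g rho : variation T tau g = V -> 0 <= rho -> rho <= r ->
    regret T (eta r T tau V) (gamma r T tau V) 0 g tau ((- rho) *: delta_mx 0 i0)
    <= r / 2 * (3 * q)%:R.
  move=> varV rho_ge0 rho_le; have := small_regretN T g 0 ((- rho) *: delta_mx 0 i0).
  rewrite varV subr0 normv_scale_delta normrN ger0_norm // => /(_ rho_le max_ge) le_eps.
  by apply: le_trans le_eps _; rewrite ler_pM2l ?divr_gt0.
have horizonY : (q + tau.+1 + (5 * n - q) = T)%N by rewrite /T /n; nia.
have varX : variation T tau (line i0 (two_blocks tau.+1 (4 * n) n 1 (-4))) = V.
  by rewrite variation_two_blocks /V //; first ring; nia.
have varY : variation T tau (line i0 (two_blocks tau.+1 q (5 * n - q) 3 0)) = V.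
  by rewrite (variation_two_blocks _ _ _ horizonY) /V //; first ring; nia.
have boundX := le_trans (regret_two_blocks_ge i0 1 (-4) erefl 0 (ltW eta_gt0) gamma_le)
  (regret_le _ _ varX (lexx 0) (ltW r_gt0)).
have boundY := le_trans (regret_two_blocks_ge i0 3 0 horizonY r (ltW eta_gt0) gamma_le)
  (regret_le _ _ varY (ltW r_gt0) (lexx r)).
have rq_gt0 : 0 < r * q%:R by rewrite pmulr_rgt0 // ltr0n; lia.
have etaq_ge0 := mulr_ge0 (ltW eta_gt0) (ler0n R q).
move: boundX boundY; rewrite /n !(mul0rn, expr0n, mul0r, addr0); lra.
Qed.
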